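(* Let $K$ be a field and let $f\colon\mathbb Z^k\to K$ be the characteristic function of a half-space in $\mathbb Z^k$. Then $f$ is a hypergeometric term on $\mathbb Z^k$; in fact, for every $\vec w\in\mathbb Z^k$, $f=f^{\vec w}$ almost everywhere.
   Context: $f^{\vec w}(\vec z)=f(\vec z+\vec w)$. A half-space is $\{\vec z\in\mathbb Z^k:\vec v\cdot\vec z>n\}$ with $\vec v\in\mathbb Z^k$, $n\in\mathbb Z$. A hyperplane is $\{\vec z\in\mathbb Z^k:\vec v\cdot\vec z=n\}$ with $\vec v\in\mathbb Z^k\setminus\{0\}$, $n\in\mathbb Z$; a set of measure zero is a subset covered by finitely many hyperplanes; two functions are equal almost everywhere if they agree outside a set of measure zero. A hypergeometric term on $\mathbb Z^k$ over $K$ is a function $f\colon\mathbb Z^k\to K$ such that for each $i\in\{1,\dots,k\}$ there are nonzero polynomials $A_i,B_i\in K[\vec z]$ with $A_i(\vec z)f(\vec z)=B_i(\vec z)f(\vec z+\vec e_i)$ for all $\vec z\in\mathbb Z^k$. *)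

From HB Require Import structures.
From mathcomp Require Import all_boot all_order all_algebra.
From mathcomp Require Import mpoly.
Set Implicit Arguments. Unset Strict Implicit. Unset Printing Implicit Defensive.
Import Order.TTheory GRing.Theory Num.Theory.
Local Open Scope ring_scope.

Definition zvec (k : nat) := 'I_k -> int.

Definition zdot (k : nat) (v z : zvec k) : int := \sum_(i < k) v i * z i.

Definition zadd (k : nat) (z w : zvec k) : zvec k := fun i => z i + w i.

Definition zunit (k : nat) (i : 'I_k) : zvec k := fun j => (i == j)%:R.

Definition shift (K : Type) (k : nat) (f : zvec k -> K) (w : zvec k) : zvec k -> K :=
  fun z => f (zadd z w).

Definition halfspace (k : nat) (v : zvec k) (n : int) : zvec k -> Prop :=
  fun z => n < zdot v z.

Definition halfspace_char (K : fieldType) (k : nat) (v : zvec k) (n : int)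
  : zvec k -> K := fun z => if n < zdot v z then 1 else 0.

Definition hyperplane (k : nat) (v : zvec k) (n : int) : zvec k -> Prop :=
  fun z => zdot v z = n.

Definition measure_zero (k : nat) (S : zvec k -> Prop) : Prop :=
  exists (m : nat) (vs : 'I_m -> zvec k) (ns : 'I_m -> int),
    (forall j, exists i, vs j i != 0) /\
    (forall z, S z -> exists j, hyperplane (vs j) (ns j) z).

Definition ae_eq (K : Type) (k : nat) (f g : zvec k -> K) : Prop :=
  exists S : zvec k -> Prop, measure_zero S /\ (forall z, ~ S z -> f z = g z).

Definition zeval (K : fieldType) (k : nat) (p : {mpoly K[k]}) (z : zvec k) : K :=
  p.@[fun i => (z i)%:~R].

Definition hypergeometric (K : fieldType) (k : nat) (f : zvec k -> K) : Prop :=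
  forall i : 'I_k, exists A B : {mpoly K[k]},
    A != 0 /\ B != 0 /\
    forall z : zvec k, zeval A z * f z = zeval B z * f (zadd z (zunit i)).

(** The indicator [f] of [{z | v.z > n}] satisfies [f z = f (z + w)] unless the
    level [v.z] lies within [|v.w|] of [n], i.e. on one of finitely many parallel
    hyperplanes; this gives the almost-everywhere statement.  For the shift by
    [e_i] the same finitely many levels are cut out by the polynomial
    [prod_c (v.X - c)], which then serves as both [A_i] and [B_i].  When [v_i]
    vanishes in [K] this polynomial may be zero; but then [m = |v_i|] is zero in
    [K], and since every integer is congruent mod [m] to some [j < m], the
    polynomial [prod_(j < m) (X_i - j)] vanishes at every integer point. *)

From mathcomp Require Import all_boot all_order all_algebra.
From mathcomp Require Import mpoly.
From mathcomp Require Import zify.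
Import GRing.Theory Num.Theory.
Local Open Scope ring_scope.

Lemma zdotDr k (v z w : zvec k) : zdot v (zadd z w) = zdot v z + zdot v w.
Proof. by rewrite /zdot -big_split; apply: eq_bigr => i _; rewrite /zadd mulrDr. Qed.

Lemma zdot_zunit k (v : zvec k) i : zdot v (zunit i) = v i.
Proof.
rewrite /zdot (bigD1 i) //= big1 ?addr0 /zunit ?eqxx ?mulr1 //.
by move=> j /negbTE; rewrite eq_sym => ->; rewrite mulr0.
Qed.

Lemma zdot0l k (v z : zvec k) : (forall i, v i = 0) -> zdot v z = 0.
Proof. by move=> v0; rewrite /zdot big1 // => i _; rewrite v0 mul0r. Qed.

Definition crossing_level (n d : int) (j : 'I_(2 * `|d|).+1) : int :=
  n + (nat_of_ord j)%:Z - (`|d|%N)%:Z.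

Lemma ltr_crossing_level (n a d : int) :
  (n < a) != (n < a + d) -> exists j, a = crossing_level n d j.
Proof.
move=> cross.
have lt_j : (absz (a - n + (`|d|%N)%:Z)%R < (2 * `|d|).+1)%N.
  by move: cross; case: (ltrP n a); case: (ltrP n (a + d)) => //= *; lia.
exists (Ordinal lt_j); rewrite /crossing_level /=.
by move: cross; case: (ltrP n a); case: (ltrP n (a + d)) => //= *; lia.
Qed.

Lemma halfspace_char_shift_crossing (K : fieldType) k (v : zvec k) n (z w : zvec k) :
  halfspace_char K v n z != halfspace_char K v n (zadd z w) ->
  exists j, zdot v z = crossing_level n (zdot v w) j.
Proof.
move=> neq; apply: ltr_crossing_level; apply/negP => /eqP same.
by move: neq; rewrite /halfspace_char zdotDr -same eqxx.
Qed.

Section VanishingPolynomials.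

Variables (K : fieldType) (k : nat).

Definition zdot_mpoly (v : zvec k) : {mpoly K[k]} := \sum_(l < k) (v l)%:~R *: 'X_l.

Lemma zeval_zdot_mpoly v z : zeval (zdot_mpoly v) z = (zdot v z)%:~R.
Proof.
rewrite /zeval /zdot_mpoly raddf_sum rmorph_sum /=; apply: eq_bigr => l _.
by rewrite mevalZ mevalXU rmorphM.
Qed.

Lemma mcoeff_zdot_mpoly v i : (zdot_mpoly v)@_U_(i) = (v i)%:~R.
Proof.
rewrite /zdot_mpoly raddf_sum (bigD1 i) //= big1 ?addr0.
  by rewrite mcoeffZ mcoeffXU eqxx mulr1.
by move=> l /negbTE ne_li; rewrite mcoeffZ mcoeffXU ne_li mulr0.
Qed.

Lemma subr_mpolyC_neq0 (p : {mpoly K[k]}) i c : p@_U_(i) != 0 -> p - c%:MP != 0.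
Proof.
apply: contra_neq => /eqP; rewrite subr_eq0 => /eqP ->.
by rewrite mcoeffC mnm1_eq0 mulr0.
Qed.

Lemma levels_vanishing_mpoly (v : zvec k) i m (c : 'I_m -> int) :
  (v i)%:~R != 0 :> K ->
  exists P : {mpoly K[k]}, P != 0 /\
    forall z, (exists j, zdot v z = c j) -> zeval P z = 0.
Proof.
move=> vi_neq0; exists (\prod_(j < m) (zdot_mpoly v - ((c j)%:~R)%:MP)); split.
  rewrite prodf_seq_neq0; apply/allP => j _ /=; apply: (@subr_mpolyC_neq0 _ i).
  by rewrite mcoeff_zdot_mpoly.
move=> z [j lvl]; rewrite /zeval rmorph_prod /=; apply/eqP.
rewrite prodf_seq_eq0; apply/hasP; exists j; first exact: mem_index_enum.
by rewrite /= mevalB mevalC -/(zeval _ z) zeval_zdot_mpoly lvl subrr.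
Qed.

Lemma integer_points_vanishing_mpoly (i : 'I_k) m :
  (0 < m)%N -> m%:R = 0 :> K ->
  exists P : {mpoly K[k]}, P != 0 /\ forall z, zeval P z = 0.
Proof.
move=> m_gt0 m0; exists (\prod_(j < m) ('X_i - (j%:R)%:MP)); split.
  rewrite prodf_seq_neq0; apply/allP => j _ /=; apply: (@subr_mpolyC_neq0 _ i).
  by rewrite mcoeffXU eqxx oner_eq0.
have m_neq0 : Posz m != 0 by rewrite eqz_nat -lt0n.
move=> z; have mod_ge0 := modz_ge0 (z i) m_neq0.
have lt_mod : (`|(z i %% m)%Z|%N < m)%N.
  by have := ltz_pmod (z i) (m_gt0 : 0 < Posz m); lia.
rewrite /zeval rmorph_prod /=; apply/eqP; rewrite prodf_seq_eq0; apply/hasP.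
exists (Ordinal lt_mod); first exact: mem_index_enum.
rewrite /= mevalB mevalC mevalXU subr_eq0.
change ((z i)%:~R == (Posz `|(z i %% m)%Z|)%:~R :> K).
rewrite (gez0_abs mod_ge0) {1}(divz_eq (z i) m) intrD intrM.
by rewrite [(Posz m)%:~R]m0 mulr0 add0r.
Qed.

End VanishingPolynomials.

Lemma natr_absz_eq0 (R : pzRingType) (x : int) : x%:~R = 0 :> R -> `|x|%:R = 0 :> R.
Proof.
by rewrite -[_%:R]/((Posz _)%:~R) abszE; case: (ler0P x) => _; rewrite ?intrN => ->; rewrite ?oppr0.
Qed.

Lemma hypergeometric_of_vanishing (K : fieldType) k (f : zvec k -> K) :
  (forall i, exists P : {mpoly K[k]}, P != 0 /\
     forall z, f z != f (zadd z (zunit i)) -> zeval P z = 0) ->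
  hypergeometric f.
Proof.
move=> van i; have [P [P_neq0 P_jump]] := van i.
exists P, P; do 2!split=> //; move=> z.
have [/P_jump -> | /negPn/eqP ->] := boolP (f z != f (zadd z (zunit i))) => //.
by rewrite !mul0r.
Qed.

Lemma halfspace_char_jump_vanishing (K : fieldType) k (v : zvec k) n i :
  exists P : {mpoly K[k]}, P != 0 /\ forall z,
    halfspace_char K v n z != halfspace_char K v n (zadd z (zunit i)) ->
    zeval P z = 0.
Proof.
have [vi_eq0 | vi_neq0] := eqVneq (v i) 0.
  exists 1; split=> [|z]; first exact: oner_neq0.
  by rewrite /halfspace_char zdotDr zdot_zunit vi_eq0 addr0 eqxx.
have [viK_eq0 | viK_neq0] := eqVneq ((v i)%:~R : K) 0.
  have vi_gt0 : (0 < `|v i|)%N by rewrite absz_gt0.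
  have [P [P_neq0 P0]] :=
    @integer_points_vanishing_mpoly K k i _ vi_gt0 (natr_absz_eq0 _ _ viK_eq0).
  by exists P; split=> // z _; apply: P0.
have [P [P_neq0 P_lvl]] :=
  @levels_vanishing_mpoly K k v i _ (crossing_level n (zdot v (zunit i))) viK_neq0.
by exists P; split=> // z /halfspace_char_shift_crossing /P_lvl.
Qed.

Lemma measure_zero_levels k (v : zvec k) i m (c : 'I_m -> int) :
  v i != 0 -> measure_zero (fun z => exists j, zdot v z = c j).
Proof. by move=> vi_neq0; exists m, (fun _ => v), c; split=> [_|z]; first exists i. Qed.

Lemma ae_eq_pointwise (K : Type) k (f g : zvec k -> K) : f =1 g -> ae_eq f g.
Proof.
move=> fg; exists (fun _ => False); split=> [|z _]; last exact: fg.
by exists 0%N, (fun _ _ => 0), (fun _ => 0); split=> [[]|z []].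
Qed.

Lemma halfspace_char_shift_ae (K : fieldType) k (v : zvec k) n w :
  ae_eq (halfspace_char K v n) (shift (halfspace_char K v n) w).
Proof.
have [i vi_neq0 | v_eq0] := pickP (fun i => v i != 0); last first.
  have v0 i : v i = 0 by apply/eqP/negbFE/v_eq0.
  by apply: ae_eq_pointwise => z; rewrite /shift /halfspace_char !zdot0l.
exists (fun z => exists j, zdot v z = crossing_level n (zdot v w) j); split.
  exact: measure_zero_levels vi_neq0.
move=> z off.
have [// | jump] := eqVneq (halfspace_char K v n z) (halfspace_char K v n (zadd z w)).
by exfalso; apply: off; exact: halfspace_char_shift_crossing jump.
Qed.

Theorem lemmaB19 (K : fieldType) (k : nat) (v : zvec k) (n : int) :
  hypergeometric (halfspace_char K v n) /\
  (forall w : zvec k, ae_eq (halfspace_char K v n) (shift (halfspace_char K v n) w)).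
Proof.
split; last exact: halfspace_char_shift_ae.
apply: hypergeometric_of_vanishing => i.
exact: halfspace_char_jump_vanishing.
Qed.
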